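(* Let $(S,\curlyvee)$ be a $\curlyvee$-algebra and let $I$ be a relatively maximal $\lesssim$-ideal of $S$ (i.e., relatively maximal with respect to not containing some $d\in S$). Define $E_I=\{(a,b)\in S\times S: a\notin I,\ b\notin I,\ a\curlyvee b\notin I\}$ and $\epsilon_I=E_I\cup(I\times I)$. Then $\epsilon_I$ is a congruence on $(S,\curlyvee)$ and $S/\epsilon_I$ is a flat $\curlyvee$-algebra. Moreover, $S$ is a subdirect product of the algebras $S/\epsilon_I$ as $I$ ranges over all relatively maximal $\lesssim$-ideals of $S$.
   Context: A $\curlyvee$-algebra is an algebra $(S,\curlyvee)$ with one binary operation such that, defining $a\sqcup b=a\curlyvee(a\curlyvee b)$ and $a\lesssim b$ iff $b\sqcup a=b$: $\sqcup$ is associative, $a\sqcup a=a$ and $a\sqcup b=(a\sqcup b)\sqcup a$; $\curlyvee$ is commutative and idempotent; $(a\curlyvee b)\sqcup(a\sqcup b)=a\sqcup b$; $a\sqcup(b\curlyvee c)=(a\sqcup b)\curlyvee(a\sqcup c)$; and if $d\lesssim a,b,c,a\curlyvee b,b\curlyvee c$ then $d\lesssim a\curlyvee c$. A $\lesssim$-ideal is a non-empty subset $I$ that is a down-set under $\lesssim$ with $i\sqcup j\in I$ for all $i,j\in I$; it is relatively maximal with respect to not containing $d$ if $d\notin I$ and no $\lesssim$-ideal properly containing $I$ omits $d$. A flat $\curlyvee$-algebra is an algebra $(T,\curlyvee)$ with an element $0$ such that $a\curlyvee b=0$ for distinct $a,b$ both different from $0$, and $a\curlyvee a=a$, $a\curlyvee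 0=0\curlyvee a=a$ for all $a$. *)

Set Implicit Arguments.

Section VeeAlgebra.
Variable S : Type.
Variable op : S -> S -> S.

Definition sqcup (a b : S) : S := op a (op a b).
Definition lesssim (a b : S) : Prop := sqcup b a = b.

Definition vee_algebra : Prop :=
  (forall a b c, sqcup a (sqcup b c) = sqcup (sqcup a b) c) /\
  (forall a, sqcup a a = a) /\
  (forall a b, sqcup a b = sqcup (sqcup a b) a) /\
  (forall a b, op a b = op b a) /\
  (forall a, op a a = a) /\
  (forall a b, sqcup (op a b) (sqcup a b) = sqcup a b) /\
  (forall a b c, sqcup a (op b c) = op (sqcup a b) (sqcup a c)) /\
  (forall a b c d, lesssim d a -> lesssim d b -> lesssim d c ->
      lesssim d (op a b) -> lesssim d (op b c) -> lesssim d (op a c)).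

Definition lesssim_ideal (I : S -> Prop) : Prop :=
  (exists i, I i) /\
  (forall a b, I b -> lesssim a b -> I a) /\
  (forall i j, I i -> I j -> I (sqcup i j)).

Definition rel_max_wrt (I : S -> Prop) (d : S) : Prop :=
  lesssim_ideal I /\ ~ I d /\
  (forall J, lesssim_ideal J -> (forall x, I x -> J x) ->
      (exists x, J x /\ ~ I x) -> J d).

Definition rel_max_ideal (I : S -> Prop) : Prop := exists d, rel_max_wrt I d.

Definition E_I (I : S -> Prop) (a b : S) : Prop := ~ I a /\ ~ I b /\ ~ I (op a b).
Definition eps_I (I : S -> Prop) (a b : S) : Prop := E_I I a b \/ (I a /\ I b).

Definition congruence (e : S -> S -> Prop) : Prop :=
  (forall a, e a a) /\ (forall a b, e a b -> e b a) /\
  (forall a b c, e a b -> e b c -> e a c) /\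
  (forall a a' b b', e a a' -> e b b' -> e (op a b) (op a' b')).

End VeeAlgebra.

Definition flat (T : Type) (opT : T -> T -> T) : Prop :=
  exists z : T,
    (forall a b, a <> b -> a <> z -> b <> z -> opT a b = z) /\
    (forall a, opT a a = a) /\
    (forall a, opT a z = a /\ opT z a = a).

(* (T, opT) together with q : S -> T is (isomorphic to) the quotient algebra
   S/e: q is a surjective homomorphism whose kernel is exactly e. *)
Definition is_quotient (S : Type) (op : S -> S -> S) (e : S -> S -> Prop)
  (T : Type) (opT : T -> T -> T) (q : S -> T) : Prop :=
  (forall t, exists a, q a = t) /\
  (forall a b, q a = q b <-> e a b) /\
  (forall a b, q (op a b) = opT (q a) (q b)).

(* If I is relatively maximal with respect to d and x is not in I, then the
   ideal generated by I and x contains d, i.e. d ≲ i ⊔ x for some i in I, and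
   finitely many such i can be replaced by a single one.  Since i ⊔ _
   distributes over ∨, transporting the last axiom along i ⊔ _ shows that
   a ∨ c is outside I whenever a, b, c, a ∨ b, b ∨ c are: this is the
   transitivity of E_I, from which ε_I is a congruence.  The classes of ε_I
   are I, acting as the zero, and classes whose products with one another
   fall into I, so S/ε_I is flat.  Distinct a and b are separated by a
   relatively maximal ideal obtained by Zorn's lemma from the principal ideal
   of b, of a or of a ∨ b. *)
From mathcomp Require Import ssreflect ssrfun ssrbool boolp classical_sets.

Set Implicit Arguments.
Unset Strict Implicit.
Unset Printing Implicit Defensive.

Local Open Scope classical_set_scope.

(* Zorn_bigcup needs [P set0]; adjoining [set0] to the maximal candidates
   removes that requirement. *)
Lemma Zorn_bigcup_above (T : Type) (P : set (set T)) (A0 : set T) :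
  P A0 ->
  (forall F : set (set T), F !=set0 -> F `<=` [set B | P B /\ A0 `<=` B] ->
     total_on F subset -> P (\bigcup_(X in F) X)) ->
  exists A, A0 `<=` A /\ P A /\ forall B, A `<` B -> ~ P B.
Proof.
move=> PA0 chainP; pose Q B := B = set0 \/ P B /\ A0 `<=` B.
have /Zorn_bigcup[A [QA Amax]] : forall F, F `<=` Q -> total_on F subset ->
    Q (\bigcup_(X in F) X).
  move=> F FQ Ftot; pose F' := [set X | F X /\ X !=set0].
  have F'P : F' `<=` [set B | P B /\ A0 `<=` B].
    by move=> X [/FQ[-> [] //|//]].
  have -> : \bigcup_(X in F) X = \bigcup_(X in F') X.
    apply/seteqP; split=> x [X FX Xx].
      by exists X => //; split=> //; exists x.
    by exists X => //; case: FX.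
  have [[X F'X]|F'0] := pselect (F' !=set0).
    right; split.
      by apply: chainP => [|//|Y Z [FY _] [FZ _]]; [exists X | exact: Ftot].
    by have [_ A0X] := F'P X F'X; move=> x /A0X; exists X.
  by left; apply/seteqP; split=> x // [X F'X _]; apply: F'0; exists X.
have [PA A0A] : P A /\ A0 `<=` A.
  case: QA => [A0_eq|//]; subst A.
  suff A0_0 : A0 = set0 by rewrite -A0_0; split=> //; apply: subset_refl.
  apply/seteqP; split=> // x A0x; apply: (Amax A0).
    by split=> // /(_ x A0x).
  by right; split=> //; apply: subset_refl.
exists A; do 2!split=> //.
move=> B AB PB; apply: (Amax B AB); right; split=> //.
exact: subset_trans A0A (properW AB).
Qed.

Lemma congruence_quotient (S : Type) (op : S -> S -> S) (e : S -> S -> Prop) :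
  congruence op e ->
  exists (T : Type) (opT : T -> T -> T) (q : S -> T), is_quotient op e opT q.
Proof.
case=> e_refl [e_sym [e_trans e_op]].
pose T := {P : set S | exists a, P = e a}.
pose q a : T := exist _ (e a) (ex_intro _ a erefl).
have qE a b : q a = q b <-> e a b.
  split=> [/(congr1 sval)/= eab | eab]; first by rewrite eab; apply: e_refl.
  apply: eq_exist; apply/funext => x; apply/propext; split.
    exact: e_trans (e_sym _ _ eab).
  exact: e_trans eab.
have q_surj (t : T) : exists a, q a = t.
  by case: t => P [a Pa]; exists a; apply: eq_exist.
pose rep t := sval (cid (q_surj t)).
have repK t : q (rep t) = t := svalP (cid (q_surj t)).
exists T, (fun t u => q (op (rep t) (rep u))), q.
split=> //; split=> // a b.
by apply/qE; apply: e_op; apply/qE; rewrite repK.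
Qed.

Section VeeAlgebra.
Variables (S : Type) (op : S -> S -> S).

Local Notation "x ⊔ y" := (sqcup op x y) (at level 50, left associativity).
Local Notation "x ≲ y" := (lesssim op x y) (at level 70).

Hypothesis HS : vee_algebra op.

Lemma sqcupA a b c : a ⊔ (b ⊔ c) = a ⊔ b ⊔ c.
Proof. by case: HS. Qed.

Lemma sqcupxx a : a ⊔ a = a.
Proof. by case: HS => _ []. Qed.

Lemma opC a b : op a b = op b a.
Proof. by case: HS => _ [_ [_ []]]. Qed.

Lemma opxx a : op a a = a.
Proof. by case: HS => _ [_ [_ [_ []]]]. Qed.

Lemma sqcup_opr a b c : a ⊔ op b c = op (a ⊔ b) (a ⊔ c).
Proof. by case: HS => _ [_ [_ [_ [_ [_ []]]]]]. Qed.

Lemma le_op_trans a b c d :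
  d ≲ a -> d ≲ b -> d ≲ c -> d ≲ op a b -> d ≲ op b c -> d ≲ op a c.
Proof. by case: HS => _ [_ [_ [_ [_ [_ [_ ]]]]]]; apply. Qed.

Lemma le_refl a : a ≲ a.
Proof. exact: sqcupxx. Qed.

Lemma le_trans a b c : a ≲ b -> b ≲ c -> a ≲ c.
Proof. by rewrite /lesssim => ab bc; rewrite -bc -sqcupA ab. Qed.

Lemma le_sqcupl a b : a ≲ a ⊔ b.
Proof. by case: HS => _ [_ [/(_ a b) aba _]]; rewrite /lesssim -aba. Qed.

Lemma le_sqcupr a b : b ≲ a ⊔ b.
Proof. by rewrite /lesssim -sqcupA sqcupxx. Qed.

Lemma sqcup_lub a b c : a ≲ c -> b ≲ c -> a ⊔ b ≲ c.
Proof. by rewrite /lesssim => ac bc; rewrite sqcupA ac bc. Qed.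

Lemma le_sqcup2 a a' b b' : a ≲ a' -> b ≲ b' -> a ⊔ b ≲ a' ⊔ b'.
Proof.
move=> aa' bb'; apply: sqcup_lub.
  exact: le_trans aa' (le_sqcupl _ _).
exact: le_trans bb' (le_sqcupr _ _).
Qed.

Lemma le_op_sqcup a b : op a b ≲ a ⊔ b.
Proof.
have [_ [_ [_ [_ [_ [opK _]]]]]] := HS.
by rewrite -(opK a b); apply: le_sqcupl.
Qed.

Lemma eq_of_le_op a b : a ≲ b -> b ≲ a -> a ≲ op a b -> a = b.
Proof.
rewrite /lesssim /sqcup => ab ba a_ab.
have aba : op (op a b) a = a by rewrite opC.
rewrite aba aba in a_ab.
by rewrite [op b a]opC -a_ab opC -a_ab in ab.
Qed.

Lemma bigcup_chain_ideal (F : set (set S)) :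
  F !=set0 -> F `<=` lesssim_ideal op -> total_on F subset ->
  lesssim_ideal op (\bigcup_(X in F) X).
Proof.
move=> [X FX] Fideal Ftot; split; last split.
- by have [[x Xx] _] := Fideal X FX; exists x, X.
- move=> a b [Y FY Yb] ab; exists Y => //.
  by have [_ [Ydown _]] := Fideal Y FY; exact: Ydown ab.
- move=> i j [Y FY Yi] [Z FZ Zj].
  have [YZ|ZY] := Ftot Y Z FY FZ.
    have [_ [_ Zsqcup]] := Fideal Z FZ.
    by exists Z => //; apply: Zsqcup => //; exact: YZ.
  have [_ [_ Ysqcup]] := Fideal Y FY.
  by exists Y => //; apply: Ysqcup => //; exact: ZY.
Qed.

Lemma principal_ideal x : lesssim_ideal op (fun y => y ≲ x).
Proof.
split; first by exists x; exact: le_refl.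
split; first by move=> a b bx ab; exact: le_trans ab bx.
by move=> i j; apply: sqcup_lub.
Qed.

Lemma exists_rel_max_wrt (I0 : set S) d :
  lesssim_ideal op I0 -> ~ I0 d -> exists I, rel_max_wrt op I d /\ I0 `<=` I.
Proof.
move=> I0ideal nI0d; pose P J := lesssim_ideal op J /\ ~ J d.
have [|F F0 FP Ftot|I [I0I [[Iideal nId] Imax]]] := @Zorn_bigcup_above _ P I0.
- by split.
- split; first by apply: bigcup_chain_ideal => // X /FP[[]].
  by move=> [X /FP[[_ nXd] _]].
exists I; do 3!split=> //.
move=> J Jideal IJ [x [Jx nIx]]; apply: contrapT => nJd.
by apply: (Imax J) => //; split=> // /(_ x Jx).
Qed.

Lemma rel_max_below a x : ~ a ≲ x -> exists I, rel_max_wrt op I a /\ I x.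
Proof.
move=> nax; have [I [HR I0I]] := exists_rel_max_wrt (principal_ideal x) nax.
by exists I; split=> //; apply: I0I; exact: le_refl.
Qed.

Section Ideal.
Variable I : set S.
Hypothesis HI : lesssim_ideal op I.

Lemma ideal_le a b : I b -> a ≲ b -> I a.
Proof. by case: HI => _ [+ _]; apply. Qed.

Lemma ideal_sqcup a b : I a -> I b -> I (a ⊔ b).
Proof. by case: HI => _ [_]; apply. Qed.

Lemma ideal_op a b : I a -> I b -> I (op a b).
Proof.
by move=> Ia Ib; apply: ideal_le (ideal_sqcup Ia Ib) (le_op_sqcup a b).
Qed.

Lemma notin_sqcupl a b : ~ I a -> ~ I (a ⊔ b).
Proof. by move=> nIa Iab; apply/nIa/(ideal_le Iab)/le_sqcupl. Qed.

Lemma notin_opl a b : ~ I a -> I b -> ~ I (op a b).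
Proof.
move=> nIa Ib Iab; apply/nIa/(ideal_le (ideal_op Ib Iab)).
have -> : op b (op a b) = b ⊔ a by rewrite /sqcup (opC b a).
exact: le_sqcupr.
Qed.

Lemma eps_refl a : eps_I op I a a.
Proof. by have [Ia|nIa] := EM (I a); [right | left; rewrite /E_I opxx]. Qed.

Lemma E_sym a b : E_I op I a b -> E_I op I b a.
Proof. by case=> nIa [nIb nIab]; rewrite /E_I opC. Qed.

Lemma eps_sym a b : eps_I op I a b -> eps_I op I b a.
Proof. by case=> [/E_sym|[Ia Ib]]; [left|right]. Qed.

Lemma eps_notinl a b : ~ I a -> eps_I op I a b -> E_I op I a b.
Proof. by move=> nIa [//|[]]. Qed.

Lemma eps_op_absorb a x : ~ I a -> ~ I (op a x) -> eps_I op I (op a x) a.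
Proof.
by move=> nIa nIax; left; do 2!split=> //; rewrite opC; apply: notin_sqcupl.
Qed.

Lemma eps_op_ideal a x : ~ I a -> I x -> eps_I op I (op a x) a.
Proof. by move=> nIa Ix; apply/eps_op_absorb/notin_opl. Qed.

Definition eventually_in (P : S -> Prop) :=
  exists i, I i /\ forall j, i ≲ j -> P j.

Lemma eventually_and P Q :
  eventually_in P -> eventually_in Q -> eventually_in (fun j => P j /\ Q j).
Proof.
move=> [i [Ii iP]] [k [Ik kQ]]; exists (i ⊔ k); split; first exact: ideal_sqcup.
move=> j ikj; split; [apply: iP | apply: kQ]; apply: le_trans ikj.
  exact: le_sqcupl.
exact: le_sqcupr.
Qed.

Lemma eventually_in_ideal P : eventually_in P -> exists j, I j /\ P j.
Proof. by move=> [i [Ii iP]]; exists i; split=> //; apply/iP/le_refl. Qed.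

Lemma quotient_eps_flat T (opT : T -> T -> T) (q : S -> T) :
  is_quotient op (eps_I op I) opT q -> flat opT.
Proof.
case=> q_surj [qE qop]; have [i0 Ii0] := proj1 HI.
have notin a : q a <> q i0 -> ~ I a by move=> qa0 Ia; apply/qa0/qE; right.
exists (q i0); split; last split.
- move=> t u; have [a <-] := q_surj t; have [b <-] := q_surj u.
  move=> qab /notin nIa /notin nIb; rewrite -qop; apply/qE; right; split=> //.
  by apply: contrapT => nIab; apply/qab/qE; left.
- by move=> t; have [a <-] := q_surj t; rewrite -qop opxx.
- move=> t; have [a <-] := q_surj t.
  have qa0 : q (op a i0) = q a.
    apply/qE; have [Ia|nIa] := EM (I a); last exact: eps_op_ideal.
    by right; split=> //; apply: ideal_op.
  by rewrite -!qop [op i0 a]opC qa0.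
Qed.

End Ideal.

Section RelativelyMaximal.
Variables (I : set S) (d : S).
Hypothesis HR : rel_max_wrt op I d.

Let HI : lesssim_ideal op I := proj1 HR.
Let nId : ~ I d := proj1 (proj2 HR).

Lemma rel_max_wrt_eventually x : ~ I x -> eventually_in I (fun j => d ≲ j ⊔ x).
Proof.
move=> nIx; have [_ [_ Imax]] := HR; have [i0 Ii0] := proj1 HI.
pose J y := exists i, I i /\ y ≲ i ⊔ x.
have Jideal : lesssim_ideal op J.
  split; first by exists x, i0; split=> //; apply: le_sqcupr.
  split.
    by move=> a b [i [Ii bi]] ab; exists i; split=> //; exact: le_trans ab bi.
  move=> a b [i [Ii ai]] [k [Ik bk]]; exists (i ⊔ k).
  split; first exact: ideal_sqcup.
  apply: sqcup_lub.
    exact: le_trans ai (le_sqcup2 (le_sqcupl i k) (le_refl x)).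
  exact: le_trans bk (le_sqcup2 (le_sqcupr i k) (le_refl x)).
have [i [Ii di]] : J d.
  apply: Imax Jideal _ _.
    by move=> y Iy; exists y; split=> //; apply: le_sqcupl.
  by exists x; split=> //; exists i0; split=> //; apply: le_sqcupr.
by exists i; split=> // j ij; apply: le_trans di (le_sqcup2 ij (le_refl x)).
Qed.

Lemma E_trans a b c : E_I op I a b -> E_I op I b c -> E_I op I a c.
Proof.
move=> [nIa [nIb nIab]] [_ [nIc nIbc]]; do 2!split=> //; move=> Iac.
have [j [Ij [da [db [dc [dab dbc]]]]]] : exists j, I j /\
    d ≲ j ⊔ a /\ d ≲ j ⊔ b /\ d ≲ j ⊔ c /\ d ≲ j ⊔ op a b /\ d ≲ j ⊔ op b c.
  apply: eventually_in_ideal.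
  by do 4!(apply: (eventually_and HI); first exact: rel_max_wrt_eventually);
    exact: rel_max_wrt_eventually.
rewrite !sqcup_opr in dab dbc.
have := le_op_trans da db dc dab dbc; rewrite -sqcup_opr => dac.
exact/nId/(ideal_le HI (ideal_sqcup HI Ij Iac)).
Qed.

Lemma eps_trans a b c : eps_I op I a b -> eps_I op I b c -> eps_I op I a c.
Proof.
case=> [Eab|[Ia Ib]] [Ebc|[Ib' Ic]].
- by left; apply: E_trans Eab Ebc.
- by case: Eab => _ [].
- by case: Ebc.
- by right.
Qed.

Lemma ideal_op_eps a b b' : ~ I a -> eps_I op I b b' -> I (op a b) -> I (op a b').
Proof.
move=> nIa [Ebb'|[Ib _]] Iab; last by case: (notin_opl HI nIa Ib Iab).
apply: contrapT => nIab'; have [_ [nIb' _]] := Ebb'.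
by have [_ [_]] := E_trans (conj nIa (conj nIb' nIab')) (E_sym Ebb').
Qed.

Lemma eps_opl a b b' : eps_I op I b b' -> eps_I op I (op a b) (op a b').
Proof.
move=> bb'; have [Ia|nIa] := EM (I a).
  case: bb' => [Ebb'|[Ib Ib']]; last by right; split; apply: ideal_op.
  have [nIb [nIb' _]] := Ebb'.
  have ca_c c : ~ I c -> eps_I op I (op a c) c.
    by move=> nIc; rewrite opC; exact: (eps_op_ideal HI nIc Ia).
  apply: eps_trans (ca_c _ nIb) _; apply: eps_trans (or_introl Ebb') _.
  exact/eps_sym/ca_c.
have [Iab|nIab] := EM (I (op a b)).
  by right; split=> //; apply: ideal_op_eps Iab.
have nIab' : ~ I (op a b') by move/(ideal_op_eps nIa (eps_sym bb')).
apply: eps_trans (eps_op_absorb HI nIa nIab) _.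
exact/eps_sym/(eps_op_absorb HI nIa nIab').
Qed.

Lemma eps_congruence : congruence op (eps_I op I).
Proof.
split; first exact: eps_refl.
split; first exact: eps_sym.
split; first exact: eps_trans.
move=> a a' b b' aa' bb'; apply: eps_trans (eps_opl a bb') _.
by rewrite (opC a) (opC a'); apply: eps_opl.
Qed.

End RelativelyMaximal.

Lemma rel_max_separates a b :
  a <> b -> exists I, rel_max_ideal op I /\ ~ eps_I op I a b.
Proof.
move=> nab.
have [ab|/rel_max_below[I [HR Ib]]] := EM (a ≲ b); last first.
  exists I; split; first by exists a.
  by move=> /(eps_notinl (proj1 (proj2 HR))) [_ []].
have [ba|/rel_max_below[I [HR Ia]]] := EM (b ≲ a); last first.
  exists I; split; first by exists b.
  by move=> /eps_sym /(eps_notinl (proj1 (proj2 HR))) [_ []].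
have /rel_max_below[I [HR Iab]] : ~ a ≲ op a b by move/(eq_of_le_op ab ba).
exists I; split; first by exists a.
by move=> /(eps_notinl (proj1 (proj2 HR))) [_ []].
Qed.

End VeeAlgebra.

Theorem lemma4p6 (S : Type) (op : S -> S -> S) (HS : vee_algebra op) :
  (forall I : S -> Prop, rel_max_ideal op I ->
     congruence op (eps_I op I) /\
     exists (T : Type) (opT : T -> T -> T) (q : S -> T),
       is_quotient op (eps_I op I) opT q /\ flat opT) /\
  (* subdirect product: the canonical map a |-> (class of a in S/ε_I)_I
     into the product of the quotients is injective *)
  (forall a b : S,
     (forall I : S -> Prop, rel_max_ideal op I ->
        (forall x, eps_I op I a x <-> eps_I op I b x)) -> a = b).
Proof.
split=> [I [d HR] | a b same_eps].
  have eps_cong := eps_congruence HS HR.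
  split=> //; have [T [opT [q Hq]]] := congruence_quotient eps_cong.
  by exists T, opT, q; split=> //; apply: (quotient_eps_flat HS (proj1 HR) Hq).
apply: contrapT => nab; have [I [HI nab_eps]] := rel_max_separates HS nab.
by apply/nab_eps/(same_eps I HI b); apply: (eps_refl HS).
Qed.
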